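(* Let $f : \widehat{\mathbb{Z}} \to \widehat{\mathbb{Z}}$ be congruence preserving and $p$ a prime number. The following are equivalent: (i) $\lambda_f(p) \ne p$. (ii) The reduction $f_p : \mathbb{Z}/p\mathbb{Z} \to \mathbb{Z}/p\mathbb{Z}$ is not a cyclic permutation of length $p$. (iii) For every $x \in \mathbb{Z}/p\mathbb{Z}$, the cycle length $l_x$ of $f_p$ on $x$ satisfies $l_x < p$. (iv) $\alpha(\lambda_f(p)) < p$.
   Context: $\widehat{\mathbb{Z}} = \varprojlim_n \mathbb{Z}/n\mathbb{Z}$; $s\equiv_n t$ means $s-t\in n\widehat{\mathbb{Z}}$. A continuous $f$ is congruence preserving if $s\equiv_n t$ implies $f(s)\equiv_n f(t)$ for all $s,t\in\widehat{\mathbb{Z}}$, $n\ge1$; it then induces reductions $f_n:\mathbb{Z}/n\mathbb{Z}\to\mathbb{Z}/n\mathbb{Z}$. For $x \in \mathbb{Z}/n\mathbb{Z}$, the cycle length $l_x$ of $f_n$ on $x$ is the least $l\ge1$ such that $f_n^k(x)=f_n^{k+l}(x)$ for some $k\ge0$; $\lambda_f(n)$, the period of $f_n$, is the least common multiple of all $l_x$. A cyclic permutation of length $p$ means a permutation of $\mathbb{Z}/p\mathbb{Z}$ consisting of a single cycle through all $p$ elements. $\alpha(m)$ denotes the largest prime-power divisor of the positive integer $m$ (with $\alpha(1)=1$). *)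

From mathcomp Require Import all_boot.
From mathcomp Require Import boolp.

Set Implicit Arguments.
Unset Strict Implicit.
Unset Printing Implicit Defensive.

(* Profinite integers as the inverse limit of Z/nZ:
   an element is a family of residues x k in Z/(k+1)Z (represented by a nat
   < k+1), compatible under the projections Z/(k+1)Z -> Z/(j+1)Z whenever
   (j+1) | (k+1). *)
Definition zhat_axiom (x : nat -> nat) : Prop :=
  (forall k, x k < k.+1) /\
  (forall j k, j.+1 %| k.+1 -> x k = x j %[mod j.+1]).

Definition Zhat := {x : nat -> nat | zhat_axiom x}.

Definition zc (s : Zhat) (k : nat) : nat := proj1_sig s k.

(* s == t (mod n) in Zhat, i.e. s - t \in n Zhat: s = t + n*u for some u,
   with the ring operations of Zhat computed componentwise. *)
Definition zcong (n : nat) (s t : Zhat) : Prop :=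
  exists u : Zhat, forall k, zc s k = zc t k + n * zc u k %[mod k.+1].

(* continuity for the profinite topology (basic neighbourhoods s + m Zhat) *)
Definition zcontinuous (f : Zhat -> Zhat) : Prop :=
  forall (s : Zhat) (n : nat), 0 < n ->
    exists2 m, 0 < m & forall t : Zhat, zcong m s t -> zcong n (f s) (f t).

Definition cong_preserving (f : Zhat -> Zhat) : Prop :=
  forall (n : nat) (s t : Zhat), 0 < n -> zcong n s t -> zcong n (f s) (f t).

Lemma zemb_axiom (x : nat) : zhat_axiom (fun k => x %% k.+1).
Proof.
rewrite /zhat_axiom; split=> [k|j k djk]; first by rewrite ltn_pmod.
by rewrite modn_mod modn_dvdm.
Qed.

Definition zemb (x : nat) : Zhat := exist _ _ (zemb_axiom x).

(* The reduction f_n : Z/nZ -> Z/nZ (n >= 1), with Z/nZ represented by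
   {0, ..., n-1}:  f_n (x mod n) = f(x) mod n. *)
Definition fred (f : Zhat -> Zhat) (n : nat) (x : nat) : nat :=
  zc (f (zemb x)) n.-1.

(* cycle length l_x of g on x: least l >= 1 with g^k x = g^(k+l) x for some k
   (0 if no such l exists, which does not happen for maps of a finite set). *)
Definition is_cyc (g : nat -> nat) (x l : nat) : Prop :=
  0 < l /\ exists k, iter k g x = iter (k + l) g x.

Definition cycle_len (g : nat -> nat) (x : nat) : nat :=
  match pselect (exists l, asbool (is_cyc g x l)) with
  | left h => ex_minn h
  | right _ => 0
  end.

Definition lambda_f (f : Zhat -> Zhat) (n : nat) : nat :=
  \big[lcmn/1]_(x < n) cycle_len (fred f n) x.

Definition is_cyclic_perm (g : nat -> nat) (n : nat) : Prop :=
  exists2 x0, x0 < n &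
    perm_eq (traject g x0 n) (iota 0 n) /\ iter n g x0 = x0.

(* prime powers p^k (k >= 0, so 1 counts) *)
Definition is_ppow (d : nat) : bool :=
  asbool (exists p k, prime p /\ d = p ^ k).

Definition alpha (m : nat) : nat :=
  \max_(d < m.+1 | (d %| m) && is_ppow d) d.

From mathcomp Require Import all_boot.
From mathcomp Require Import boolp.

Set Implicit Arguments.
Unset Strict Implicit.
Unset Printing Implicit Defensive.

(* For such a map
   every cycle length is at most p, and some cycle length equals p exactly
   when f_p is a p-cycle, in which case all of them are p.  A prime power
   dividing the lcm of the cycle lengths divides one of them; as p is prime,
   lambda_f(p) = p forces a cycle of length p, and alpha(lambda_f(p)) is at
   most the longest cycle length. *)

Definition period (g : nat -> nat) (n : nat) : nat :=
  \big[lcmn/1]_(x < n) cycle_len g x.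

Lemma fred_lt (f : Zhat -> Zhat) (n y : nat) : 0 < n -> fred f n y < n.
Proof.
move=> n_gt0; rewrite /fred /zc; case: (f (zemb y)) => s [s_lt _] /=.
by have := s_lt n.-1; rewrite prednK.
Qed.

Lemma cycle_lenP (g : nat -> nat) (x : nat) :
    (exists l, is_cyc g x l) ->
  is_cyc g x (cycle_len g x) /\ (forall l, is_cyc g x l -> cycle_len g x <= l).
Proof.
move=> [l0 cyc_l0]; rewrite /cycle_len; case: pselect => [ex|[]]; last first.
  by exists l0; apply/asboolP.
case: ex_minnP => m /asboolP cyc_m min_m.
by split=> // l cyc_l; apply: min_m; apply/asboolP.
Qed.

Lemma iter_mod (g : nat -> nat) (n x0 m : nat) :
  iter n g x0 = x0 -> iter m g x0 = iter (m %% n) g x0.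
Proof.
move=> gn_x0; rewrite {1}(divn_eq m n) addnC iterD; congr iter.
by elim: (m %/ n) => [|q IHq] //; rewrite mulSn iterD IHq gn_x0.
Qed.

Lemma eq_iter_mod (g : nat -> nat) (n x0 a b : nat) :
    0 < n -> uniq (traject g x0 n) -> iter n g x0 = x0 ->
  iter a g x0 = iter b g x0 -> a = b %[mod n].
Proof.
move=> n_gt0 uniq_orbit gn_x0.
rewrite (iter_mod a gn_x0) (iter_mod b gn_x0).
rewrite -!(nth_traject g (ltn_pmod _ n_gt0)) => eq_nth.
by apply: (uniqP x0 uniq_orbit) eq_nth; rewrite inE size_traject ltn_pmod.
Qed.

Lemma pfactor_dvd_biglcm (I : finType) (P : pred I) (F : I -> nat) (q k : nat) :
    prime q -> 0 < k -> (forall i, P i -> 0 < F i) ->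
  q ^ k %| \big[lcmn/1]_(i | P i) F i -> exists2 i, P i & q ^ k %| F i.
Proof.
move=> q_pr k_gt0 F_gt0.
pose reflects m := 0 < m /\ (q ^ k %| m -> exists2 i, P i & q ^ k %| F i).
suff [] : reflects (\big[lcmn/1]_(i | P i) F i) by [].
apply: big_ind => [|m1 m2 [m1_gt0 IH1] [m2_gt0 IH2]|i Pi].
- by split=> //; rewrite pfactor_dvdn // logn1 leqNgt k_gt0.
- split; first by rewrite lcmn_gt0 m1_gt0.
  by rewrite !pfactor_dvdn ?lcmn_gt0 ?m1_gt0 // logn_lcm // leq_max -!pfactor_dvdn
    // => /orP[/IH1|/IH2].
- by split; [exact: F_gt0 | exists i].
Qed.

Lemma alpha_lt (N m : nat) :
  (forall d, is_ppow d -> d %| N -> d < m) -> alpha N < m.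
Proof.
move=> ppow_lt; have m_gt0 : 0 < m.
  by apply: leq_ltn_trans (ppow_lt 1 _ (dvd1n N)); last by apply/asboolP; exists 2, 0.
by apply: (big_ind (fun d => d < m)) => // [a b|d /andP[d_N /ppow_lt]];
  [rewrite gtn_max => -> | exact].
Qed.

Lemma alpha_prime (p : nat) : prime p -> alpha p = p.
Proof.
move=> p_pr; apply/eqP; rewrite eqn_leq; apply/andP; split.
  by apply/bigmax_leqP => d _; rewrite -ltnS.
apply: (leq_bigmax_cond (ord_max : 'I_p.+1)).
by rewrite /= dvdnn; apply/asboolP; exists p, 1; rewrite expn1.
Qed.

Section SelfMapOfInitialSegment.

Variables (g : nat -> nat) (n : nat).
Hypothesis g_lt : forall y, g y < n.

Lemma iter_lt (k y : nat) : y < n -> iter k g y < n.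
Proof. by elim: k => [|k IHk] //= /IHk. Qed.

Lemma traject_sub_iota (x m : nat) : x < n -> {subset traject g x m <= iota 0 n}.
Proof. by move=> x_lt y /trajectP[i _ ->]; rewrite mem_iota add0n iter_lt. Qed.

Lemma exists_is_cyc (x : nat) : x < n -> exists2 l, l <= n & is_cyc g x l.
Proof.
move=> x_lt.
have: ~~ uniq (traject g x n.+1).
  apply/negP=> /uniq_leq_size/(_ (traject_sub_iota (m:=n.+1) x_lt)).
  by rewrite size_traject size_iota ltnn.
case/(uniqPn x) => i [j [lt_ij]]; rewrite size_traject => j_lt.
rewrite !nth_traject ?(ltn_trans lt_ij) // => eq_ij.
exists (j - i); first exact: leq_trans (leq_subr i j) j_lt.
by split; [rewrite subn_gt0 | exists i; rewrite subnKC // ltnW].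
Qed.

Lemma is_cyc_cycle_len (x : nat) : x < n -> is_cyc g x (cycle_len g x).
Proof. by move=> /exists_is_cyc[l _ cyc_l]; case: (cycle_lenP (ex_intro _ l cyc_l)). Qed.

Lemma cycle_len_min (x l : nat) : is_cyc g x l -> cycle_len g x <= l.
Proof. by move=> cyc_l; case: (cycle_lenP (ex_intro _ l cyc_l)) => _; apply. Qed.

Lemma cycle_len_gt0 (x : nat) : x < n -> 0 < cycle_len g x.
Proof. by case/is_cyc_cycle_len. Qed.

Lemma cycle_len_le (x : nat) : x < n -> cycle_len g x <= n.
Proof. by case/exists_is_cyc => l l_le /cycle_len_min/leq_trans; apply. Qed.

Lemma cyclic_perm_of_cycle_len (x : nat) :
  x < n -> cycle_len g x = n -> is_cyclic_perm g n.
Proof.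
move=> x_lt len_x; have [_ [k eq_k]] := is_cyc_cycle_len x_lt.
rewrite len_x in eq_k; set x0 := iter k g x.
(* x0 lies on the cycle; minimality of its length n makes its n iterates distinct. *)
have x0_lt : x0 < n by rewrite iter_lt.
have uniq_orbit : uniq (traject g x0 n).
  apply: contraT => /(uniqPn x0)[i [j [lt_ij]]]; rewrite size_traject => j_lt.
  rewrite !nth_traject ?(ltn_trans lt_ij) // /x0 -!iterD => eq_ij.
  have : n <= j - i.
    rewrite -len_x; apply: cycle_len_min; split; first by rewrite subn_gt0.
    by exists (i + k); rewrite addnAC subnKC ?(ltnW lt_ij) // -eq_ij addnC.
  by rewrite leqNgt (leq_ltn_trans (leq_subr _ _) j_lt).
exists x0 => //; split; last by rewrite /x0 -iterD addnC -eq_k.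
have [_ same_mem] := uniq_min_size uniq_orbit (traject_sub_iota (m:=n) x0_lt)
  (eq_leq (etrans (size_iota 0 n) (esym (size_traject g x0 n)))).
exact: uniq_perm uniq_orbit (iota_uniq 0 n) same_mem.
Qed.

Lemma cycle_len_cyclic_perm (x : nat) :
  is_cyclic_perm g n -> x < n -> cycle_len g x = n.
Proof.
move=> [x0 x0_lt [orbit_perm gn_x0]] x_lt.
have uniq_orbit : uniq (traject g x0 n) by rewrite (perm_uniq orbit_perm) iota_uniq.
have : x \in traject g x0 n by rewrite (perm_mem orbit_perm) mem_iota.
case/trajectP => i _ def_x; subst x; apply/eqP; rewrite eqn_leq.
rewrite cycle_len_min /=; last first.
  split; first exact: leq_ltn_trans x0_lt.
  by exists 0; rewrite -!iterD add0n addnC iterD gn_x0.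
have [len_gt0 [k]] := is_cyc_cycle_len x_lt.
have n_gt0 : 0 < n by exact: leq_ltn_trans x0_lt.
rewrite -!iterD => /(eq_iter_mod n_gt0 uniq_orbit gn_x0)/eqP.
rewrite addnAC -[X in X == _ %[mod _]]addn0 eqn_modDl mod0n eq_sym => len_mod.
by rewrite leqNgt; apply: contraL len_mod => len_lt; rewrite modn_small // -lt0n.
Qed.

Lemma not_cyclic_permP :
  0 < n -> ~ is_cyclic_perm g n <-> (forall x, x < n -> cycle_len g x < n).
Proof.
move=> n_gt0; split=> [not_cyc x x_lt | all_short cyc].
  rewrite ltn_neqAle cycle_len_le // andbT.
  by apply/eqP => /(cyclic_perm_of_cycle_len x_lt).
by have := all_short 0 n_gt0; rewrite cycle_len_cyclic_perm ?ltnn.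
Qed.

Lemma pfactor_dvd_period (q k : nat) :
  prime q -> 0 < k -> q ^ k %| period g n -> exists2 x, x < n & q ^ k <= cycle_len g x.
Proof.
have len_gt0 (x : 'I_n) : 0 < cycle_len g x by rewrite cycle_len_gt0.
move=> q_pr k_gt0 /(pfactor_dvd_biglcm q_pr k_gt0 (fun x _ => len_gt0 x)).
by case=> x _ /(dvdn_leq (len_gt0 x)); exists x.
Qed.

Lemma period_cyclic_perm : is_cyclic_perm g n -> period g n = n.
Proof.
move=> cyc; have n_gt0 : 0 < n by case: cyc => x0 x0_lt _; exact: leq_ltn_trans x0_lt.
apply/eqP; rewrite eqn_dvd; apply/andP; split.
  by apply/dvdn_biglcmP => x _; rewrite cycle_len_cyclic_perm.
by apply: (biglcmn_sup (Ordinal n_gt0)); rewrite //= cycle_len_cyclic_perm.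
Qed.

Lemma cyclic_perm_of_period_prime : prime n -> period g n = n -> is_cyclic_perm g n.
Proof.
move=> n_pr period_n.
have [|x x_lt] := @pfactor_dvd_period n 1 n_pr erefl; first by rewrite expn1 period_n.
rewrite expn1 => n_le; apply: (cyclic_perm_of_cycle_len x_lt).
by apply/eqP; rewrite eqn_leq cycle_len_le.
Qed.

Lemma alpha_period_lt :
  1 < n -> (forall x, x < n -> cycle_len g x < n) -> alpha (period g n) < n.
Proof.
move=> n_gt1 all_short; apply: alpha_lt => d /asboolP[q [[|k] [q_pr ->]]] //.
by case/pfactor_dvd_period => // x /all_short/(leq_ltn_trans _); apply.
Qed.

End SelfMapOfInitialSegment.

Theorem lemma3p10 (f : Zhat -> Zhat) (p : nat) :
  zcontinuous f -> cong_preserving f -> prime p ->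
  [/\ (lambda_f f p <> p <-> ~ is_cyclic_perm (fred f p) p),
      (~ is_cyclic_perm (fred f p) p <->
         (forall x, x < p -> cycle_len (fred f p) x < p)) &
      ((forall x, x < p -> cycle_len (fred f p) x < p) <->
         alpha (lambda_f f p) < p)].
Proof.
move=> _ _ p_pr; have p_gt0 := prime_gt0 p_pr.
change (lambda_f f p) with (period (fred f p) p).
have g_lt : forall y, fred f p y < p by move=> y; apply: fred_lt.
have shortP := not_cyclic_permP g_lt p_gt0.
split=> //.
- split=> [ne_p cyc | not_cyc eq_p].
    exact: ne_p (period_cyclic_perm g_lt cyc).
  exact: not_cyc (cyclic_perm_of_period_prime g_lt p_pr eq_p).
- split=> [|alpha_lt_p]; first exact: alpha_period_lt (prime_gt1 p_pr).
  apply/shortP => cyc; move: alpha_lt_p.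
  by rewrite period_cyclic_perm // alpha_prime // ltnn.
Qed.
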